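(* Let $(A,G)$ be a stable admissible pair with $A\in M_{Q_0}(\mathbb Z)$. Assume that every cluster variable of $\mathcal A(A,\mathbf u)$ can be written as a Laurent polynomial with positive coefficients in the initial cluster $\mathbf u$. Then every cluster variable of $\mathcal A(A/G,\mathbf v)$ can be written as a Laurent polynomial with positive coefficients in the initial cluster $\mathbf v$.
   Context: $Q_0$ finite, $A=(a_{ij})$ skew-symmetrizable ($DA$ skew-symmetric for a positive integer diagonal $D$). Mutation of matrices: $\mu_k(B)=(b'_{ij})$ with $b'_{ij}=-b_{ij}$ if $k\in\{i,j\}$, else $b_{ij}+\tfrac12(|b_{ik}|b_{kj}+b_{ik}|b_{kj}|)$; of seeds: $x_k$ replaced by $x'_k$ with $x_kx'_k=\prod_{b_{ik}>0}x_i^{b_{ik}}+\prod_{b_{ik}<0}x_i^{-b_{ik}}$. The cluster algebra $\mathcal A(B,\mathbf w)$ is generated over $\mathbb Z$ by the cluster variables (entries of clusters of seeds mutation-equivalent to $(B,\mathbf w)$). A permutation $g$ of $Q_0$ is an automorphism of $B$ if $b_{gi,gj}=b_{ij}$; a group $G$ of automorphisms is admissible ($(B,G)$ admissible pair) if for distinct $i,j$ in the same orbit there is no path of length $1$ or $2$ from $i$ to $j$ in the quiver of $B$ ($b_{ij}\le0$ and no $k$ with $b_{ik}>0,b_{kj}>0$). With $\overline Q_0$ the set of orbits, $(A/G)_{\mathbf i,\mathbf j}=\sum_{k\in\mathbf i}a_{k,j}$ ($j\in\mathbf j$). Orbit mutation $\mu^G_{\mathbf i}=\prod_{j\in\mathbf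 i}\mu_j$; $(A,G)$ is stable if all $(\mu^G_{\mathbf i_m}\circ\cdots\circ\mu^G_{\mathbf i_1}(A),G)$ are admissible for all finite sequences of orbits. $\mathbf u=(u_i)_{i\in Q_0}$, $\mathbf v=(v_{\mathbf i})_{\mathbf i\in\overline Q_0}$ are indeterminates. *)

From HB Require Import structures.
From mathcomp Require Import all_boot all_order all_algebra all_fingroup.
From mathcomp Require Import fraction.
From mathcomp Require Import mpoly.
Set Implicit Arguments. Unset Strict Implicit. Unset Printing Implicit Defensive.
Import Order.TTheory GRing.Theory Num.Theory.
Local Open Scope ring_scope.

Section ClusterDefs.
Variable I : finType.

Definition exmat := I -> I -> int.

Definition skew_symmetrizable (B : exmat) : Prop :=
  exists d : I -> nat, (forall i, (0 < d i)%N) /\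
    forall i j, (d i)%:Z * B i j = - ((d j)%:Z * B j i).

Definition mut_mx (k : I) (B : exmat) : exmat := fun i j =>
  if (i == k) || (j == k) then - B i j
  else B i j + ((`|B i k| * B k j + B i k * `|B k j|) %/ 2)%Z.

Definition ambient := {fraction {mpoly int[#|I|]}}.

Definition cluster := I -> ambient.

Definition mut_seed (k : I) (s : exmat * cluster) : exmat * cluster :=
  let: (B, x) := s in
  (mut_mx k B,
   fun i => if i == k then
       (\prod_(j | 0 < B j k) x j ^+ absz (B j k)
        + \prod_(j | B j k < 0) x j ^+ absz (B j k)) / x k
     else x i).

Definition init_cluster : cluster :=
  fun i => tofrac ('X_(enum_rank i) : {mpoly int[#|I|]}).

Definition is_cluster_variable (B : exmat) (z : ambient) : Prop :=
  exists (ks : seq I) (i : I),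
    (foldl (fun s k => mut_seed k s) (B, init_cluster) ks).2 i = z.

Definition positive_laurent (z : ambient) : Prop :=
  exists (p : {mpoly int[#|I|]}) (m : 'X_{1.. #|I|}),
    (forall m', 0 <= p@_m') /\ z * tofrac ('X_[m] : {mpoly int[#|I|]}) = tofrac p.

Definition orb (G : {group {perm I}}) (i : I) : {set I} :=
  [set j | [exists g : {perm I}, (g \in G) && (g i == j)]].

Definition orbset (G : {group {perm I}}) : {set {set I}} := [set orb G i | i : I].

Definition admissible (B : exmat) (G : {group {perm I}}) : Prop :=
  (forall g, g \in G -> forall i j, B (g i) (g j) = B i j) /\
  (forall i j, i != j -> j \in orb G i ->
     B i j <= 0 /\ ~ (exists k, 0 < B i k /\ 0 < B k j)).

Definition orbit_mut (J : {set I}) (B : exmat) : exmat :=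
  foldr mut_mx B (enum J).

End ClusterDefs.

Definition orbT (I : finType) (G : {group {perm I}}) :=
  {J : {set I} | J \in orbset G}.

Definition stable (I : finType) (B : exmat I) (G : {group {perm I}}) : Prop :=
  forall s : seq (orbT G),
    admissible (foldl (fun C (J : orbT G) => orbit_mut (val J) C) B s) G.

Definition quot_mx (I : finType) (A : exmat I) (G : {group {perm I}})
  : exmat (orbT G) := fun P Q =>
  match [pick j in val Q] with
  | Some j => \sum_(k in val P) A k j
  | None => 0
  end.

Arguments quot_mx {I} A G.

(* Since (A, G) is admissible and A skew-symmetrizable, A vanishes on each orbit and
   its columns are sign-coherent along every orbit.  Hence the mutations at the vertices
   of an orbit J commute, their composite is the orbit mutation, and the quotient of the
   result is the mutation of A/G at J.  By induction along a sequence of orbits, every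
   cluster of A/G is the image of a cluster of A under the substitution sending u_i to
   the variable of the orbit of i.  Cluster variables are subtraction-free, i.e. quotients
   a / b of polynomials positive at (1, ..., 1); the substitution is well defined on such
   quotients and maps positive Laurent polynomials to positive Laurent polynomials. *)

From Pilot Require Import Defs.
From mathcomp Require Import all_boot all_order all_algebra all_fingroup.
From mathcomp Require Import fraction mpoly.
From HB Require Import structures.
From mathcomp Require Import zify ring.
From Stdlib Require Import FunctionalExtensionality.
Set Implicit Arguments. Unset Strict Implicit. Unset Printing Implicit Defensive.
Import Order.TTheory GRing.Theory Num.Theory.
Local Open Scope ring_scope.

Definition pospart (b : int) : int := if 0 < b then b else 0.
Definition negpart (b : int) : int := if b < 0 then - b else 0.

Definition mut_incr (x y : int) : int :=
  pospart x * pospart y - negpart x * negpart y.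

Lemma mut_incrE (x y : int) : ((`|x| * y + x * `|y|) %/ 2)%Z = mut_incr x y.
Proof.
suff -> : `|x| * y + x * `|y| = mut_incr x y * 2 by rewrite mulzK.
by rewrite /mut_incr /pospart /negpart; case: (ltrgtP 0 x); case: (ltrgtP 0 y); lia.
Qed.

Lemma mut_incr0l y : mut_incr 0 y = 0.
Proof. by rewrite /mut_incr /pospart /negpart ltxx !mul0r subrr. Qed.

Lemma mut_incr0r x : mut_incr x 0 = 0.
Proof. by rewrite /mut_incr /pospart /negpart ltxx !mulr0 subrr. Qed.

Lemma mut_incr_skew (di dj dk bik bki bkj bjk : int) :
  0 < di -> 0 < dj -> 0 < dk ->
  di * bik = - (dk * bki) -> dk * bkj = - (dj * bjk) ->
  di * mut_incr bik bkj = - (dj * mut_incr bjk bki).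
Proof.
move=> di_gt0 dj_gt0 dk_gt0 skik skkj.
have skij : di * bik * bkj = - (bki * (dk * bkj)) by rewrite skik; ring.
rewrite skkj in skij.
rewrite /mut_incr /pospart /negpart.
by case: (ltrgtP 0 bik); case: (ltrgtP 0 bkj); case: (ltrgtP 0 bki); case: (ltrgtP 0 bjk);
  nia.
Qed.

Lemma ger0_pospart x : 0 <= x -> pospart x = x.
Proof. by rewrite /pospart; case: ltrgtP; lia. Qed.
Lemma ler0_pospart x : x <= 0 -> pospart x = 0.
Proof. by rewrite /pospart; case: ltrgtP; lia. Qed.
Lemma ger0_negpart x : 0 <= x -> negpart x = 0.
Proof. by rewrite /negpart; case: ltrgtP; lia. Qed.
Lemma ler0_negpart x : x <= 0 -> negpart x = - x.
Proof. by rewrite /negpart; case: ltrgtP; lia. Qed.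
Lemma pospart_ge0 x : 0 <= pospart x.
Proof. by rewrite /pospart; case: ltrgtP; lia. Qed.
Lemma negpart_ge0 x : 0 <= negpart x.
Proof. by rewrite /negpart; case: ltrgtP; lia. Qed.

Definition sign_coherent (T : finType) (S : {set T}) (f : T -> int) :=
  forall p p', p \in S -> p' \in S -> 0 < f p -> 0 <= f p'.

Lemma sign_coherentP (T : finType) (S : {set T}) (f : T -> int) :
  sign_coherent S f -> {in S, forall p, 0 <= f p} \/ {in S, forall p, f p <= 0}.
Proof.
move=> coh; case: (boolP [exists p in S, 0 < f p]) => [/existsP[p /andP[pS fp]]|/existsPn].
  by left=> p' p'S; apply: coh pS p'S fp.
by move=> nopos; right=> p pS; move: (nopos p); rewrite pS /= -leNgt.
Qed.

Lemma pospart_sum (T : finType) (S : {set T}) (f : T -> int) : sign_coherent S f ->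
  pospart (\sum_(p in S) f p) = \sum_(p in S) pospart (f p).
Proof.
case/sign_coherentP=> sgn.
  rewrite ger0_pospart ?sumr_ge0 //; apply: eq_bigr => p pS; rewrite ger0_pospart ?sgn //.
rewrite ler0_pospart ?sumr_le0 // big1 // => p pS; exact: ler0_pospart (sgn p pS).
Qed.

Lemma negpart_sum (T : finType) (S : {set T}) (f : T -> int) : sign_coherent S f ->
  negpart (\sum_(p in S) f p) = \sum_(p in S) negpart (f p).
Proof.
case/sign_coherentP=> sgn.
  rewrite ger0_negpart ?sumr_ge0 // big1 // => p pS; exact: ger0_negpart (sgn p pS).
rewrite ler0_negpart ?sumr_le0 // -sumrN.
by apply: eq_bigr => p pS; rewrite ler0_negpart ?sgn.
Qed.

Definition pexp (b : int) : nat := absz (pospart b).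
Definition nexp (b : int) : nat := absz (negpart b).

Lemma absz_sum (T : finType) (S : {set T}) (g : T -> int) : (forall t, 0 <= g t) ->
  absz (\sum_(t in S) g t) = (\sum_(t in S) absz (g t))%N.
Proof.
move=> g_ge0; apply/eqP; rewrite -eqz_nat abszE ger0_norm ?sumr_ge0 //.
rewrite (big_morph Posz PoszD (erefl _)); apply/eqP/eq_bigr => t _.
by rewrite abszE ger0_norm.
Qed.

Lemma pexp_sum (T : finType) (S : {set T}) (f : T -> int) : sign_coherent S f ->
  pexp (\sum_(p in S) f p) = (\sum_(p in S) pexp (f p))%N.
Proof. by move=> coh; rewrite /pexp pospart_sum // absz_sum // => t; apply: pospart_ge0. Qed.

Lemma nexp_sum (T : finType) (S : {set T}) (f : T -> int) : sign_coherent S f ->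
  nexp (\sum_(p in S) f p) = (\sum_(p in S) nexp (f p))%N.
Proof. by move=> coh; rewrite /nexp negpart_sum // absz_sum // => t; apply: negpart_ge0. Qed.

Lemma sum_mut_incr_l (T : finType) (S : {set T}) (f : T -> int) c : sign_coherent S f ->
  \sum_(p in S) mut_incr (f p) c = mut_incr (\sum_(p in S) f p) c.
Proof. by move=> coh; rewrite /mut_incr sumrB -!mulr_suml pospart_sum ?negpart_sum. Qed.

Lemma sum_mut_incr_r (T : finType) (S : {set T}) (f : T -> int) c : sign_coherent S f ->
  \sum_(p in S) mut_incr c (f p) = mut_incr c (\sum_(p in S) f p).
Proof. by move=> coh; rewrite /mut_incr sumrB -!mulr_sumr pospart_sum ?negpart_sum. Qed.

Definition mut_seeds (I : finType) (s : exmat I * cluster I) (ks : seq I) :=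
  foldl (fun s k => mut_seed k s) s ks.

Section Mutation.
Variable I : finType.
Implicit Types (B : exmat I) (x : cluster I).

Lemma mut_mxE k B i j : mut_mx k B i j =
  if (i == k) || (j == k) then - B i j else B i j + mut_incr (B i k) (B k j).
Proof. by rewrite /mut_mx mut_incrE. Qed.

Definition exchange_poly (R : comNzRingType) B (x : I -> R) k : R :=
  \prod_j x j ^+ pexp (B j k) + \prod_j x j ^+ nexp (B j k).

Lemma eq_exchange_poly (R : comNzRingType) B C (x y : I -> R) k :
  (forall j, C j k = B j k) -> (forall j, B j k != 0 -> y j = x j) ->
  exchange_poly C y k = exchange_poly B x k.
Proof.
move=> eqC eqy; rewrite /exchange_poly.
by congr (_ + _); apply: eq_bigr => j _; rewrite eqC; have [->|/eqy->] := eqVneq (B j k) 0.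
Qed.

Lemma mut_seedE k B x : mut_seed k (B, x) =
  (mut_mx k B, fun i => if i == k then exchange_poly B x k / x k else x i).
Proof.
rewrite /mut_seed /exchange_poly.
have -> : \prod_(j | 0 < B j k) x j ^+ absz (B j k) = \prod_j x j ^+ pexp (B j k).
  by rewrite big_mkcond; apply: eq_bigr => j _; rewrite /pexp /pospart; case: ifP.
have -> : \prod_(j | B j k < 0) x j ^+ absz (B j k) = \prod_j x j ^+ nexp (B j k).
  rewrite big_mkcond; apply: eq_bigr => j _.
  by rewrite /nexp /negpart; case: ifP; rewrite ?abszN.
by [].
Qed.

Lemma foldr_mut_mxE B (l : seq I) : uniq l -> {in l &, forall j j', B j j' = 0} ->
  forall a b, foldr (@mut_mx I) B l a b =
    if (a \in l) || (b \in l) then - B a b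
    else B a b + \sum_(j <- l) mut_incr (B a j) (B j b).
Proof.
elim: l => [|k l IH]; first by move=> _ _ a b; rewrite big_nil addr0.
rewrite cons_uniq => /andP[kNl ul] B0.
have {}IH := IH ul (sub_in2 (fun j jl => mem_behead jl) B0).
have B0k j : j \in l -> B j k = 0 /\ B k j = 0.
  by move=> jl; rewrite !B0 ?inE ?jl ?eqxx ?orbT.
have colk a : foldr (@mut_mx I) B l a k = B a k.
  rewrite IH (negbTE kNl) orbF; case: ifP => [/B0k[-> _]|_]; first by rewrite oppr0.
  by rewrite big1_seq ?addr0 // => j /andP[_ /B0k[-> _]]; rewrite mut_incr0r.
have rowk b : foldr (@mut_mx I) B l k b = B k b.
  rewrite IH (negbTE kNl) /=; case: ifP => [/B0k[_ ->]|_]; first by rewrite oppr0.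
  by rewrite big1_seq ?addr0 // => j /andP[_ /B0k[_ ->]]; rewrite mut_incr0l.
move=> a b /=; rewrite mut_mxE colk rowk !inE.
case: (eqVneq a k) => [->|ak] /=; first by rewrite rowk.
case: (eqVneq b k) => [->|bk] /=; first by rewrite colk orbT.
rewrite IH big_cons; case: (boolP (a \in l)) => [/B0k[-> _]|al] /=.
  by rewrite mut_incr0l addr0.
case: (boolP (b \in l)) => [/B0k[_ ->]|bl] /=; first by rewrite mut_incr0r addr0.
by rewrite -addrA (addrC (\sum_(j <- l) _)).
Qed.

(* Mutations at pairwise non-adjacent vertices commute and leave each other's exchange
   polynomials unchanged. *)
Lemma mut_seeds_simultaneous B x (l : seq I) :
  uniq l -> {in l &, forall j j', B j j' = 0} ->
  mut_seeds (B, x) l =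
  (foldr (@mut_mx I) B (rev l), fun i => if i \in l then exchange_poly B x i / x i else x i).
Proof.
rewrite /mut_seeds; elim/last_ind: l => [|l k IH] //.
rewrite rcons_uniq => /andP[kNl ul] B0.
have B0l : {in l &, forall j j', B j j' = 0}.
  by apply: sub_in2 B0 => j jl; rewrite mem_rcons inE jl orbT.
have B0k j : j \in l -> B j k = 0 by move=> jl; rewrite B0 ?mem_rcons ?inE ?jl ?eqxx ?orbT.
have colk j : foldr (@mut_mx I) B (rev l) j k = B j k.
  have B0r : {in rev l &, forall j j', B j j' = 0}.
    by move=> ? ?; rewrite !mem_rev; apply: B0l.
  rewrite foldr_mut_mxE ?rev_uniq // !mem_rev (negbTE kNl) orbF.
  case: ifP => [/B0k->|_]; first by rewrite oppr0.
  by rewrite big1_seq ?addr0 // => m /andP[_]; rewrite mem_rev => /B0k->; rewrite mut_incr0r.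
rewrite foldl_rcons IH // mut_seedE rev_rcons; congr pair.
apply: functional_extensionality => i.
rewrite mem_rcons inE; case: (eqVneq i k) => [->|] //=; rewrite (negbTE kNl).
by congr (_ / _); apply: eq_exchange_poly => // j; case: ifP => // /B0k->; rewrite eqxx.
Qed.

Definition skew_wrt (d : I -> nat) B := forall i j, (d i)%:Z * B i j = - ((d j)%:Z * B j i).

Variable d : I -> nat.
Hypothesis d_gt0 : forall i, (0 < d i)%N.

Lemma skew_wrt_mut_mx k B : skew_wrt d B -> skew_wrt d (mut_mx k B).
Proof.
move=> skB i j; rewrite !mut_mxE orbC; case: ifP => _; first by rewrite !mulrN skB.
have skM : (d i)%:Z * mut_incr (B i k) (B k j) = - ((d j)%:Z * mut_incr (B j k) (B k i)).
  by apply: (@mut_incr_skew _ _ (d k)%:Z); rewrite ?ltz_nat ?d_gt0.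
by rewrite mulrDr skM (skB i j) [in RHS]mulrDr opprD.
Qed.

Lemma skew_wrt_gt0 B i j : skew_wrt d B -> B i j < 0 -> 0 < B j i.
Proof. by move=> /(_ i j); have := d_gt0 i; have := d_gt0 j; rewrite -!ltz_nat; nia. Qed.

Lemma skew_wrt_diag B i : skew_wrt d B -> B i i = 0.
Proof. by move=> /(_ i i); have := d_gt0 i; rewrite -!ltz_nat; nia. Qed.

End Mutation.

Section Orbits.
Variables (I : finType) (G : {group {perm I}}).
Implicit Types (B : exmat I) (P Q : Defs.orbT G).

Lemma orbP i j : reflect (exists2 g, g \in G & g i = j) (j \in orb G i).
Proof.
rewrite inE; apply: (iffP existsP) => [[g /andP[gG /eqP <-]]|[g gG <-]]; exists g => //.
by rewrite gG eqxx.
Qed.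

Lemma orb_refl i : i \in orb G i.
Proof. by apply/orbP; exists 1%g; rewrite ?group1 ?perm1. Qed.

Lemma orb_sym i j : j \in orb G i -> i \in orb G j.
Proof.
case/orbP=> g gG <-; apply/orbP; exists g^-1%g; rewrite ?groupV //.
by rewrite -permM mulgV perm1.
Qed.

Lemma orb_trans i j k : j \in orb G i -> k \in orb G j -> k \in orb G i.
Proof.
case/orbP=> g gG <- /orbP[h hG <-]; apply/orbP; exists (g * h)%g; rewrite ?groupM //.
by rewrite permM.
Qed.

Lemma orb_eq i j : j \in orb G i -> orb G j = orb G i.
Proof.
move=> ji; apply/setP => k; apply/idP/idP; first exact: orb_trans.
exact: orb_trans (orb_sym ji).
Qed.

Lemma orb_in_orbset i : orb G i \in orbset G.
Proof. by apply/imsetP; exists i. Qed.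

Definition orbit_of i : Defs.orbT G := exist _ (orb G i) (orb_in_orbset i).

Lemma orbit_of_surj P : exists p, orbit_of p = P.
Proof. by case: P => S SG; case/imsetP: (SG) => p _ eS; exists p; apply: val_inj. Qed.

Lemma orbT_nonempty P : exists p, p \in val P.
Proof. by case: (orbit_of_surj P) => p <-; exists p; apply: orb_refl. Qed.

Lemma mem_orbit_of P i : (i \in val P) = (orbit_of i == P).
Proof.
case: (orbit_of_surj P) => p <-; rewrite -val_eqE /=.
by apply/idP/eqP => [/orb_sym/orb_eq|<-] //; apply: orb_refl.
Qed.

Lemma mem_orbT_eq P Q p : p \in val P -> (p \in val Q) = (P == Q).
Proof. by rewrite !mem_orbit_of => /eqP->. Qed.

Lemma orbit_of_eq i j : j \in orb G i -> orbit_of j = orbit_of i.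
Proof. by move=> ji; apply/eqP; rewrite -mem_orbit_of. Qed.

Lemma orbit_of_act g i : g \in G -> orbit_of (g i) = orbit_of i.
Proof. by move=> gG; apply: orbit_of_eq; apply/orbP; exists g. Qed.

Lemma mem_orbT_orb P p p' : p \in val P -> p' \in val P -> p' \in orb G p.
Proof. by rewrite !mem_orbit_of => /eqP <- /eqP/(congr1 val) /= <-; apply: orb_refl. Qed.

Definition invariant B := forall g, g \in G -> forall i j, B (g i) (g j) = B i j.

Lemma sum_col_act B P g j : invariant B -> g \in G ->
  \sum_(k in val P) B k (g j) = \sum_(k in val P) B k j.
Proof.
move=> invB gG; rewrite (reindex_inj (@perm_inj _ g)) /=.
by apply: eq_big => [k|k _]; rewrite ?mem_orbit_of ?orbit_of_act ?invB.
Qed.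

Lemma quot_mxE B P Q q : invariant B -> q \in val Q ->
  quot_mx B G P Q = \sum_(k in val P) B k q.
Proof.
move=> invB qQ; rewrite /quot_mx; case: pickP => [j jQ|/(_ q)]; last by rewrite qQ.
by case/orbP: (mem_orbT_orb jQ qQ) => g gG <-; rewrite sum_col_act.
Qed.

Variable d : I -> nat.
Hypothesis d_gt0 : forall i, (0 < d i)%N.

Lemma skew_wrt_orbit_mut B (J : {set I}) : skew_wrt d B -> skew_wrt d (orbit_mut J B).
Proof. by move=> skB; rewrite /orbit_mut; elim: (enum J) => //= k l; apply: skew_wrt_mut_mx. Qed.

Section Admissible.
Variable B : exmat I.
Hypotheses (skB : skew_wrt d B) (admB : admissible B G).

Lemma admissible_invariant : invariant B.
Proof. by case: admB. Qed.

Lemma admissible_orb0 i j : j \in orb G i -> B i j = 0.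
Proof.
move=> ji; have [->|ij] := eqVneq i j; first exact: skew_wrt_diag.
have [Bij_le0 _] := admB.2 _ _ ij ji.
rewrite eq_sym in ij; have [Bji_le0 _] := admB.2 _ _ ij (orb_sym ji).
by have := skB i j; have := d_gt0 i; have := d_gt0 j; rewrite -!ltz_nat; nia.
Qed.

Lemma admissible_orbT0 P : {in val P &, forall j j', B j j' = 0}.
Proof. by move=> j j' jP j'P; apply/admissible_orb0/(mem_orbT_orb jP j'P). Qed.

Lemma admissible_sign_coherent P c : sign_coherent (val P) (fun p => B p c).
Proof.
move=> p p' pP p'P Bpc; rewrite leNgt; apply/negP => Bp'c.
have Bcp' := skew_wrt_gt0 d_gt0 skB Bp'c.
have [pp'|pp'] := eqVneq p p'; first by move: Bpc; rewrite pp' ltNge ltW.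
by have [_ []] := admB.2 _ _ pp' (mem_orbT_orb pP p'P); exists c.
Qed.

Lemma sum_mut_incr_orbits P Q j0 q : j0 \in val Q ->
  \sum_(p in val P) \sum_(j in val Q) mut_incr (B p j) (B j q) =
  mut_incr (\sum_(p in val P) B p j0) (\sum_(j in val Q) B j q).
Proof.
move=> j0Q; rewrite exchange_big /= -sum_mut_incr_r; last exact: admissible_sign_coherent.
apply: eq_bigr => j jQ; rewrite sum_mut_incr_l; last exact: admissible_sign_coherent.
by rewrite -(quot_mxE _ admissible_invariant jQ) (quot_mxE _ admissible_invariant j0Q).
Qed.

Lemma quot_orbit_mut J : invariant (orbit_mut (val J) B) ->
  quot_mx (orbit_mut (val J) B) G = mut_mx J (quot_mx B G).
Proof.
move=> invBJ; apply: functional_extensionality => P; apply: functional_extensionality => Q.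
have [q qQ] := orbT_nonempty Q; have [j jJ] := orbT_nonempty J; have invB := admissible_invariant.
have BJE p : orbit_mut (val J) B p q = if (p \in val J) || (q \in val J) then - B p q
    else B p q + \sum_(j in val J) mut_incr (B p j) (B j q).
  rewrite /orbit_mut foldr_mut_mxE ?enum_uniq ?big_enum ?mem_enum //.
  by move=> ? ?; rewrite !mem_enum; apply: admissible_orbT0.
rewrite (quot_mxE _ invBJ qQ) mut_mxE !(quot_mxE _ invB qQ) (quot_mxE _ invB jJ).
under eq_bigr => p pP do rewrite BJE (mem_orbT_eq J pP) (mem_orbT_eq J qQ).
case: (eqVneq P J) => [_|PJ] /=; first by rewrite sumrN.
case: (eqVneq Q J) => [_|QJ] /=; first by rewrite sumrN.
by rewrite big_split (sum_mut_incr_orbits _ _ jJ).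
Qed.

Lemma exchange_poly_quot (R : comNzRingType) (y : Defs.orbT G -> R) (J : Defs.orbT G) i :
  i \in val J ->
  exchange_poly (quot_mx B G) y J = exchange_poly B (fun j => y (orbit_of j)) i.
Proof.
move=> iJ; have coh P := @admissible_sign_coherent P i.
have collapse (E : int -> nat) :
    (forall P, E (\sum_(j in val P) B j i) = (\sum_(j in val P) E (B j i))%N) ->
    \prod_P y P ^+ E (quot_mx B G P J) = \prod_j y (orbit_of j) ^+ E (B j i).
  move=> Esum; rewrite (partition_big (@orbit_of) predT) //=; apply: eq_bigr => P _.
  rewrite (quot_mxE _ admissible_invariant iJ) Esum -prodrXr.
  by apply: eq_big => [j|j]; rewrite mem_orbit_of // => /eqP->.
by rewrite /exchange_poly !collapse // => P; rewrite ?pexp_sum ?nexp_sum.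
Qed.

Lemma mut_seeds_orbit x (J : Defs.orbT G) : mut_seeds (B, x) (rev (enum (val J))) =
  (orbit_mut (val J) B, fun i => if i \in val J then exchange_poly B x i / x i else x i).
Proof.
have B0J : {in rev (enum (val J)) &, forall j j', B j j' = 0}.
  by move=> j j'; rewrite !mem_rev !mem_enum; apply: admissible_orbT0.
rewrite mut_seeds_simultaneous ?rev_uniq ?enum_uniq //.
by rewrite revK; congr pair; apply: functional_extensionality => i; rewrite mem_rev mem_enum.
Qed.

End Admissible.
End Orbits.

Definition eval1 (n : nat) (p : {mpoly int[n]}) : int := p.@[fun _ => 1].

Lemma eval1M (n : nat) (p q : {mpoly int[n]}) : eval1 (p * q) = eval1 p * eval1 q.
Proof. exact: rmorphM. Qed.

Lemma eval1D (n : nat) (p q : {mpoly int[n]}) : eval1 (p + q) = eval1 p + eval1 q.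
Proof. exact: rmorphD. Qed.

Lemma eval1_gt0_neq0 (n : nat) (p : {mpoly int[n]}) : 0 < eval1 p -> tofrac p != 0.
Proof. by rewrite tofrac_eq0; apply: contraTneq => ->; rewrite /eval1 meval0. Qed.

Section Specialization.
Variables (n m : nat) (phi : {rmorphism {mpoly int[n]} -> {mpoly int[m]}}).
Hypothesis eval1_phi : forall p, eval1 (phi p) = eval1 p.

(* The positivity of a and b at (1, ..., 1), preserved by [phi], keeps [phi b] nonzero. *)
Definition specializes (x : {fraction {mpoly int[n]}}) (y : {fraction {mpoly int[m]}}) :=
  exists a b, [/\ 0 < eval1 a, 0 < eval1 b,
    x = tofrac a / tofrac b & y = tofrac (phi a) / tofrac (phi b)].

Lemma specializes_tofrac a : 0 < eval1 a -> specializes (tofrac a) (tofrac (phi a)).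
Proof. by move=> a_gt0; exists a, 1; rewrite {2}/eval1 meval1 !rmorph1 !divr1. Qed.

Lemma specializes_mul x1 x2 y1 y2 :
  specializes x1 y1 -> specializes x2 y2 -> specializes (x1 * x2) (y1 * y2).
Proof.
case=> a1 [b1 [a1_gt0 b1_gt0 -> ->]] [a2 [b2 [a2_gt0 b2_gt0 -> ->]]].
by exists (a1 * a2), (b1 * b2); split; rewrite ?eval1M ?mulr_gt0 ?mulf_div -?rmorphM.
Qed.

Lemma specializes_add x1 x2 y1 y2 :
  specializes x1 y1 -> specializes x2 y2 -> specializes (x1 + x2) (y1 + y2).
Proof.
case=> a1 [b1 [a1_gt0 b1_gt0 -> ->]] [a2 [b2 [a2_gt0 b2_gt0 -> ->]]].
have nz b : 0 < eval1 b -> tofrac (phi b) != 0 by rewrite -eval1_phi; apply: eval1_gt0_neq0.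
exists (a1 * b2 + a2 * b1), (b1 * b2); split.
- by rewrite eval1D !eval1M addr_gt0 ?mulr_gt0.
- by rewrite eval1M mulr_gt0.
- by rewrite addf_div ?eval1_gt0_neq0 // rmorphD !rmorphM.
- by rewrite addf_div ?nz // !rmorphD !rmorphM.
Qed.

Lemma specializes_inv x y : specializes x y -> specializes x^-1 y^-1.
Proof. by case=> a [b [a_gt0 b_gt0 -> ->]]; exists b, a; rewrite !invf_div. Qed.

Lemma specializes_div x1 x2 y1 y2 :
  specializes x1 y1 -> specializes x2 y2 -> specializes (x1 / x2) (y1 / y2).
Proof. by move=> s1 /specializes_inv; apply: specializes_mul. Qed.

Lemma specializes_prod (T : finType) (x : T -> {fraction {mpoly int[n]}}) y :
  (forall t, specializes (x t) (y t)) -> specializes (\prod_t x t) (\prod_t y t).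
Proof.
move=> sxy; apply: (big_ind2 specializes) => [||t _]; last exact: sxy.
  by have := @specializes_tofrac 1; rewrite !rmorph1 /eval1 meval1; apply.
by move=> ? ? ? ?; apply: specializes_mul.
Qed.

Lemma specializes_exp x y k : specializes x y -> specializes (x ^+ k) (y ^+ k).
Proof.
move=> sxy; have := specializes_prod (fun _ : 'I_k => sxy).
by rewrite !prodr_const card_ord.
Qed.

Lemma specializes_exchange_poly (T : finType) (B : exmat T) x y k :
  (forall j, specializes (x j) (y j)) ->
  specializes (exchange_poly B x k) (exchange_poly B y k).
Proof.
by move=> sxy; apply: specializes_add; apply: specializes_prod => j; apply: specializes_exp.
Qed.

Lemma specializes_mul_eq x y c e : specializes x y -> x * tofrac c = tofrac e ->
  y * tofrac (phi c) = tofrac (phi e).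
Proof.
case=> a [b [_ b_gt0 -> ->]] /(congr1 (fun z => z * tofrac b)).
rewrite mulrAC divfK ?eval1_gt0_neq0 // -!tofracM => /eqP; rewrite tofrac_eq => /eqP abce.
have phib_neq0 : tofrac (phi b) != 0 by rewrite -eval1_phi in b_gt0; apply: eval1_gt0_neq0.
by apply: (mulIf phib_neq0); rewrite mulrAC divfK // -!tofracM -!rmorphM abce.
Qed.

End Specialization.

Section Collapse.
Variables (I : finType) (G : {group {perm I}}).

Definition collapse_vars : #|I|.-tuple {mpoly int[#|{: Defs.orbT G}|]} :=
  [tuple 'X_(enum_rank (orbit_of G (enum_val i))) | i < #|I|].

Definition collapse := comp_mpoly collapse_vars.
HB.instance Definition _ := GRing.RMorphism.on collapse.

Lemma eval1_collapse p : eval1 (collapse p) = eval1 p.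
Proof.
by rewrite /eval1 comp_mpoly_meval; apply: meval_eq => i; rewrite tnth_mktuple mevalXU.
Qed.

Lemma collapseXU i : collapse 'X_(enum_rank i) = 'X_(enum_rank (orbit_of G i)).
Proof. by rewrite /collapse comp_mpolyXU -tnth_nth tnth_mktuple enum_rankK. Qed.

Lemma collapseX m : exists m', collapse 'X_[m] = 'X_[m'].
Proof.
exists (\sum_i U_(enum_rank (orbit_of G (enum_val i))) *+ m i)%MM.
by rewrite /collapse comp_mpolyX -mprodXnE; apply: eq_bigr => i _; rewrite tnth_mktuple.
Qed.

Lemma collapse_coef_ge0 p : (forall m, 0 <= p@_m) -> forall m, 0 <= (collapse p)@_m.
Proof.
move=> p_ge0 m; rewrite /collapse comp_mpolyEX raddf_sum /= sumr_ge0 // => m' _.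
by have [m'' Xm] := collapseX m'; rewrite mcoeffZ -/collapse Xm mcoeffX mulr_ge0.
Qed.

Lemma specializes_positive_laurent x y :
  specializes collapse x y -> positive_laurent x -> positive_laurent y.
Proof.
move=> sxy [p [m [p_ge0 xmp]]]; have [m' Xm'] := collapseX m.
exists (collapse p), m'; split; first exact: collapse_coef_ge0.
by rewrite -Xm'; apply: (specializes_mul_eq eval1_collapse sxy xmp).
Qed.

End Collapse.

Section OrbitMutations.
Variables (I : finType) (G : {group {perm I}}) (d : I -> nat).
Hypothesis d_gt0 : forall i, (0 < d i)%N.

Definition seeds_specialize (M : exmat I) (sA : exmat I * cluster I)
    (sQ : exmat (Defs.orbT G) * cluster (Defs.orbT G)) :=
  [/\ sA.1 = M, sQ.1 = quot_mx M G &
      forall i, specializes (collapse G) (sA.2 i) (sQ.2 (orbit_of G i))].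

Lemma seeds_specialize_orbit_mut M sA sQ (J : Defs.orbT G) :
  skew_wrt d M -> admissible M G -> admissible (orbit_mut (val J) M) G ->
  seeds_specialize M sA sQ ->
  seeds_specialize (orbit_mut (val J) M) (mut_seeds sA (rev (enum (val J))))
    (mut_seed J sQ).
Proof.
move=> skM admM admMJ [eA eQ spec].
rewrite [sA]surjective_pairing [sQ]surjective_pairing eA eQ.
rewrite (mut_seeds_orbit d_gt0) // mut_seedE; split => //=.
  by rewrite (quot_orbit_mut d_gt0) //; case: admMJ.
move=> i; rewrite -mem_orbit_of; case: ifP => // iJ.
rewrite (exchange_poly_quot d_gt0 skM admM _ iJ).
have <- : orbit_of G i = J by apply/eqP; rewrite -mem_orbit_of.
by apply: specializes_div => //; apply: (specializes_exchange_poly (eval1_collapse G)).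
Qed.

Variables (A : exmat I).
Hypotheses (skA : skew_wrt d A) (stA : stable A G).

Definition orbit_muts (s : seq (Defs.orbT G)) : exmat I :=
  foldl (fun C (J : Defs.orbT G) => orbit_mut (val J) C) A s.

(* Each orbit is traversed backwards so that the mutations compose to the [foldr] defining
   [orbit_mut]. *)
Definition unfold_orbits (s : seq (Defs.orbT G)) : seq I :=
  flatten [seq rev (enum (val J)) | J : Defs.orbT G <- s].

Lemma orbit_muts_skew s : skew_wrt d (orbit_muts s).
Proof.
elim/last_ind: s => [|s J IH] //.
by rewrite /orbit_muts foldl_rcons; apply: skew_wrt_orbit_mut.
Qed.

Lemma orbit_muts_specialize s :
  seeds_specialize (orbit_muts s) (mut_seeds (A, @init_cluster I) (unfold_orbits s))
    (mut_seeds (quot_mx A G, @init_cluster (Defs.orbT G)) s).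
Proof.
elim/last_ind: s => [|s J IH].
  split=> //= i; rewrite /init_cluster -collapseXU; apply: specializes_tofrac.
  by rewrite /eval1 mevalXU.
have admMJ := stA (rcons s J); rewrite foldl_rcons in admMJ.
rewrite /orbit_muts /unfold_orbits map_rcons flatten_rcons /mut_seeds foldl_cat !foldl_rcons.
exact: seeds_specialize_orbit_mut (orbit_muts_skew s) (stA s) admMJ IH.
Qed.

End OrbitMutations.

Theorem mainTheorem14 (I : finType) (A : exmat I) (G : {group {perm I}}) :
  skew_symmetrizable A ->
  admissible A G ->
  stable A G ->
  (forall z, is_cluster_variable A z -> positive_laurent z) ->
  (forall z, is_cluster_variable (quot_mx A G) z -> positive_laurent z).
Proof.
(* [admissible A G] is the case of the empty sequence in [stable A G]. *)
move=> [d [d_gt0 skA]] _ stA posA z [s [P <-]].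
have [p <-] := orbit_of_surj P.
have [_ _ spec] := orbit_muts_specialize d_gt0 skA stA s.
apply: specializes_positive_laurent (spec p) _.
by apply: posA; exists (unfold_orbits s), p.
Qed.
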